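(* Let $A\in H_n$ and $B\in H_m$ have eigenvalues $a_1,\dots,a_n$ and $b_1,\dots,b_m$, respectively, and set $\mathbf a=(a_1,\dots,a_n)$, $\mathbf b=(b_1,\dots,b_m)$. The following are equivalent: (a) there is a completely positive map $\Phi:M_n\to M_m$ with $\Phi(A)=B$; (b) there is an $n\times m$ nonnegative matrix $D$ with $\mathbf b=\mathbf aD$; (c) there are real numbers $\gamma_1,\gamma_2\ge0$ such that $\gamma_2\min_i a_i\le b_j\le\gamma_1\max_i a_i$ for all $1\le j\le m$. Likewise, the following are equivalent: (a') there is a unital completely positive map $\Phi:M_n\to M_m$ with $\Phi(A)=B$; (b') there is an $n\times m$ column stochastic matrix $D$ with $\mathbf b=\mathbf aD$; (c') $\min_i a_i\le b_j\le\max_i a_i$ for all $1\le j\le m$.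
   Context: $H_n$ is the set of $n\times n$ Hermitian matrices. A linear map is completely positive if all its ampliations $I_k\otimes\Phi$ preserve positive semidefiniteness; unital means $\Phi(I_n)=I_m$. A column stochastic matrix is a nonnegative matrix each of whose columns sums to 1. *)

From HB Require Import structures.
From mathcomp Require Import all_boot all_order all_algebra.
From mathcomp Require Export sesquilinear.
Set Implicit Arguments. Unset Strict Implicit. Unset Printing Implicit Defensive.
Import Order.TTheory GRing.Theory Num.Theory.
Local Open Scope ring_scope.

Section Defs.
Variable C : numClosedFieldType.

Definition adjmx (p q : nat) (M : 'M[C]_(p, q)) : 'M[C]_(q, p) := (map_mx Num.conj M)^T.

Definition psdmx (N : nat) (X : 'M[C]_N) : Prop :=
  X \is hermsymmx /\ forall v : 'cV[C]_N, 0 <= (adjmx v *m X *m v) 0 0.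

(* decomposition of an index of a k*n block matrix into (block index, inner index) *)
Definition unvec_index (k n : nat) (r : 'I_(k * n)) : 'I_k * 'I_n :=
  enum_val (cast_ord (esym (@mxvec_cast k n)) r).

(* (p,q) block (of size n x n) of X : M_k(M_n) seen as a (k*n) x (k*n) matrix *)
Definition blockmx (k n : nat) (X : 'M[C]_(k * n)) (p q : 'I_k) : 'M[C]_n :=
  \matrix_(i, j) X (mxvec_index p i) (mxvec_index q j).

(* ampliation I_k (x) Phi : M_k(M_n) -> M_k(M_m), applied blockwise *)
Definition ampliation (n m k : nat) (Phi : 'M[C]_n -> 'M[C]_m) (X : 'M[C]_(k * n))
  : 'M[C]_(k * m) :=
  \matrix_(r, s) Phi (blockmx X (unvec_index r).1 (unvec_index s).1)
                     (unvec_index r).2 (unvec_index s).2.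

Definition completely_positive (n m : nat) (Phi : 'M[C]_n -> 'M[C]_m) : Prop :=
  forall (k : nat) (X : 'M[C]_(k * n)), psdmx X -> psdmx (ampliation Phi X).

Definition unital (n m : nat) (Phi : 'M[C]_n -> 'M[C]_m) : Prop :=
  Phi 1%:M = 1%:M.

(* a : row vector listing the eigenvalues of A with algebraic multiplicity *)
Definition eigenvalues_of (n : nat) (A : 'M[C]_n) (a : 'rV[C]_n) : Prop :=
  char_poly A = \prod_(i < n) ('X - (a 0 i)%:P).

Definition nonneg_mx (p q : nat) (D : 'M[C]_(p, q)) : Prop :=
  forall i j, 0 <= D i j.

Definition column_stochastic (p q : nat) (D : 'M[C]_(p, q)) : Prop :=
  nonneg_mx D /\ forall j, \sum_i D i j = 1.

Definition rvmin (n : nat) (a : 'rV[C]_n.+1) : C := \big[Num.min/a 0 ord0]_(i < n.+1) a 0 i.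
Definition rvmax (n : nat) (a : 'rV[C]_n.+1) : C := \big[Num.max/a 0 ord0]_(i < n.+1) a 0 i.

End Defs.

(* Diagonalise A = sum_i a_i p_i^* p_i and B = sum_j b_j q_j^* q_j in orthonormal
   eigenbases (rows p_i of P, q_j of Q).  A completely positive Phi with Phi A = B gives
   the nonnegative matrix D_ij = q_j Phi(p_i^* p_i) q_j^*, and b = a D because
   b_j = q_j B q_j^*; Phi unital makes the columns of D sum to 1.  Conversely, D >= 0
   defines the measure-and-prepare map X |-> sum_ij D_ij (p_i X p_i^* ) q_j^* q_j, which
   is completely positive, sends A to B, and is unital when D is column stochastic.
   Finally b = a D for some D >= 0 (resp. column stochastic) iff every b_j is a
   nonnegative (resp. convex) combination of min a and max a, and a two-point matrix
   supported on the rows where a attains its extrema realises such combinations. *)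

From HB Require Import structures.
From mathcomp Require Import all_boot all_order all_algebra.
From mathcomp Require Import perm sesquilinear spectral ring.
Set Implicit Arguments. Unset Strict Implicit. Unset Printing Implicit Defensive.
Import Order.TTheory GRing.Theory Num.Theory.
Local Open Scope ring_scope.

Lemma char_poly_similar (R : comUnitRingType) n (P M : 'M[R]_n) :
  P \in unitmx -> char_poly (invmx P *m M *m P) = char_poly M.
Proof.
move=> P_unit; rewrite /char_poly /char_poly_mx.
have pcVK : map_mx polyC (invmx P) *m map_mx polyC P = 1%:M.
  by rewrite -map_mxM mulVmx // map_mx1.
have -> : 'X%:M - map_mx polyC (invmx P *m M *m P)
          = map_mx polyC (invmx P) *m ('X%:M - map_mx polyC M) *m map_mx polyC P.
  rewrite mulmxBr mulmxBl !map_mxM; congr (_ - _).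
  by rewrite scalar_mxC -mulmxA pcVK mulmx1.
by rewrite !det_mulmx mulrAC -det_mulmx pcVK det1 mul1r.
Qed.

Lemma eq_prod_XsubC_perm (F : fieldType) n (a d : 'I_n -> F) :
  \prod_i ('X - (a i)%:P) = \prod_i ('X - (d i)%:P) ->
  exists s : 'S_n, forall i, a i = d (s i).
Proof.
move=> E; have : perm_eq [tuple a i | i < n] [tuple d i | i < n].
  apply: prod_XsubC_eq; rewrite !big_tuple.
  by under eq_bigr do rewrite tnth_mktuple; under [RHS]eq_bigr do rewrite tnth_mktuple.
move/tuple_permP => [s /val_inj E_s]; exists s => i.
by have := congr1 (fun t => tnth t i) E_s; rewrite !tnth_mktuple.
Qed.

Section Forms.
Variable C : numClosedFieldType.
Local Notation cj := (@Num.conj C).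

Lemma hermsymmxP n (M : 'M[C]_n) :
  reflect (forall i j, M i j = cj (M j i)) (M \is hermsymmx).
Proof.
apply: (iffP (@is_hermitianmxP C n false cj M)) => [E i j|E].
  by rewrite {1}E expr0 scale1r !mxE.
by apply/matrixP=> i j; rewrite expr0 scale1r !mxE E.
Qed.

Lemma unvec_mxvec_index k n (p : 'I_k) (c : 'I_n) :
  unvec_index (mxvec_index p c) = (p, c).
Proof. by rewrite /unvec_index /mxvec_index cast_ordK enum_rankK. Qed.

Lemma big_mxvec_index k n (F : 'I_(k * n) -> C) :
  \sum_r F r = \sum_p \sum_c F (mxvec_index p c).
Proof.
rewrite pair_big /= (reindex (uncurry (@mxvec_index k n))) /=.
  by apply: eq_bigr => -[p c].
by case: (curry_mxvec_bij k n) => g h1 h2; exists g => x _; [apply: h1|apply: h2].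
Qed.

Lemma adjmx_formE N (z : 'cV[C]_N) (X : 'M[C]_N) :
  (adjmx z *m X *m z) 0 0 = \sum_r \sum_s cj (z r 0) * X r s * z s 0.
Proof.
rewrite mxE exchange_big /=; apply: eq_bigr => s _.
by rewrite mxE mulr_suml; apply: eq_bigr => r _; rewrite /adjmx !mxE.
Qed.

(* [qform u X] is u X u^* and [rank1mx u] is u^* u, for a row vector u. *)
Definition qform n (u : 'rV[C]_n) (X : 'M[C]_n) : C :=
  \sum_x \sum_y u 0 x * X x y * cj (u 0 y).

Definition rank1mx n (u : 'rV[C]_n) : 'M[C]_n := \matrix_(i, j) (cj (u 0 i) * u 0 j).

Lemma qform_is_linear n (u : 'rV[C]_n) c X Y :
  qform u (c *: X + Y) = c * qform u X + qform u Y.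
Proof.
rewrite /qform mulr_sumr -big_split /=; apply: eq_bigr => i _.
rewrite mulr_sumr -big_split /=; apply: eq_bigr => j _.
by rewrite !mxE mulrDr mulrDl !mulrA [u 0 i * c]mulrC.
Qed.

Lemma qform_conj n (u : 'rV[C]_n) (M N : 'M[C]_n) :
  (forall i j, M i j = cj (N j i)) -> cj (qform u N) = qform u M.
Proof.
move=> E; rewrite /qform rmorph_sum exchange_big /=; apply: eq_bigr => i _.
rewrite rmorph_sum; apply: eq_bigr => j _.
by rewrite !rmorphM /= conjCK -E mulrC [cj _ * _]mulrC mulrA.
Qed.

Lemma qform_rank1mx n (u v : 'rV[C]_n) :
  qform u (rank1mx v) = (\sum_x u 0 x * cj (v 0 x)) * \sum_y v 0 y * cj (u 0 y).
Proof.
rewrite /qform mulr_suml; apply: eq_bigr => x _.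
by rewrite mulr_sumr; apply: eq_bigr => y _; rewrite !mxE !mulrA.
Qed.

Lemma qform1 n (u : 'rV[C]_n) : qform u 1%:M = \sum_x u 0 x * cj (u 0 x).
Proof.
apply: eq_bigr => x _; rewrite (bigD1 x) //= big1 => [|y /negbTE yx].
  by rewrite mxE eqxx mulr1 addr0.
by rewrite mxE eq_sym yx mulr0 mul0r.
Qed.

Lemma psd_qform_blocks k n (X : 'M[C]_(k * n)) (x : 'rV[C]_n) (g : 'I_k -> C) :
  psdmx X -> 0 <= \sum_p \sum_q cj (g p) * qform x (blockmx X p q) * g q.
Proof.
move=> [_ /(_ (\col_r (cj (x 0 (unvec_index r).2) * g (unvec_index r).1)))].
congr (_ <= _); rewrite adjmx_formE big_mxvec_index.
apply: eq_bigr => p _.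
under eq_bigr => c _ do rewrite big_mxvec_index.
rewrite exchange_big /=; apply: eq_bigr => q _.
rewrite /qform mulr_sumr mulr_suml; apply: eq_bigr => c _.
rewrite mulr_sumr mulr_suml; apply: eq_bigr => d _.
by rewrite !mxE !unvec_mxvec_index /= rmorphM /= conjCK [x 0 c * _]mulrC !mulrA.
Qed.

(* v^* (Y (x) y^* y) v = g^* Y g, where g p = y v_p and v_p is the p-th block of v. *)
Lemma form_tensor_rank1mx k m (Y : 'I_k -> 'I_k -> C) (y : 'rV[C]_m) (v : 'cV[C]_(k * m)) :
  \sum_r \sum_s cj (v r 0) * (Y (unvec_index r).1 (unvec_index s).1
                   * (cj (y 0 (unvec_index r).2) * y 0 (unvec_index s).2)) * v s 0
  = \sum_p \sum_q cj (\sum_b y 0 b * v (mxvec_index p b) 0) * Y p q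
                  * \sum_b y 0 b * v (mxvec_index q b) 0.
Proof.
rewrite big_mxvec_index; apply: eq_bigr => p _.
under eq_bigr => c _ do rewrite big_mxvec_index.
rewrite exchange_big /=; apply: eq_bigr => q _.
rewrite rmorph_sum !mulr_suml; apply: eq_bigr => c _.
rewrite mulr_sumr; apply: eq_bigr => d _.
by rewrite !unvec_mxvec_index /= rmorphM /=; ring.
Qed.

Definition measure_prepare (I : finType) n m (w : I -> C) (x : I -> 'rV[C]_n)
    (y : I -> 'rV[C]_m) (X : 'M[C]_n) : 'M[C]_m :=
  \sum_t (w t * qform (x t) X) *: rank1mx (y t).

Lemma measure_prepare_is_linear (I : finType) n m w x y :
  linear (@measure_prepare I n m w x y).
Proof.
move=> c X Y; rewrite /measure_prepare scaler_sumr -big_split /=.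
apply: eq_bigr => t _.
by rewrite qform_is_linear scalerA -scalerDl mulrDr mulrCA.
Qed.

Lemma measure_prepareE (I : finType) n m w x y (X : 'M[C]_n) i j :
  @measure_prepare I n m w x y X i j
  = \sum_t w t * qform (x t) X * (cj (y t 0 i) * y t 0 j).
Proof. by rewrite summxE; apply: eq_bigr => t _; rewrite !mxE. Qed.

Lemma measure_prepare_cp (I : finType) n m w x y :
  (forall t, 0 <= w t) -> completely_positive (@measure_prepare I n m w x y).
Proof.
move=> w_ge0 k X X_psd; have [/hermsymmxP X_herm _] := X_psd; split.
  apply/hermsymmxP => r s; rewrite !mxE !measure_prepareE rmorph_sum.
  apply: eq_bigr => t _; rewrite !rmorphM /= conjCK (geC0_conj (w_ge0 t)).
  rewrite (@qform_conj _ _ (blockmx X (unvec_index r).1 (unvec_index s).1)).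
    by rewrite [cj (y t 0 _) * _]mulrC.
  by move=> i j; rewrite !mxE X_herm.
move=> v; rewrite adjmx_formE.
under eq_bigr => r _ do under eq_bigr => s _ do
  rewrite mxE measure_prepareE mulr_sumr mulr_suml.
under eq_bigr => r _ do rewrite exchange_big.
rewrite exchange_big /=; apply: sumr_ge0 => t _.
under eq_bigr => r _ do under eq_bigr => s _ do
  rewrite -[w t * _ * _]mulrA mulrCA -mulrA.
under eq_bigr => r _ do rewrite -mulr_sumr.
rewrite -mulr_sumr (form_tensor_rank1mx (fun p q => qform (x t) (blockmx X p q))).
exact: mulr_ge0 (w_ge0 t) (psd_qform_blocks _ _ X_psd).
Qed.

Lemma rank1mx_psd n (u : 'rV[C]_n) : psdmx (rank1mx u).
Proof.
split; first by apply/hermsymmxP => i j; rewrite !mxE rmorphM /= conjCK mulrC.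
move=> v; rewrite adjmx_formE.
have -> : \sum_r \sum_s cj (v r 0) * rank1mx u r s * v s 0
          = cj (\sum_s u 0 s * v s 0) * \sum_s u 0 s * v s 0.
  rewrite rmorph_sum mulr_suml; apply: eq_bigr => r _.
  rewrite mulr_sumr; apply: eq_bigr => s _.
  by rewrite !mxE rmorphM; ring.
by rewrite mulrC mul_conjC_ge0.
Qed.

Lemma cp_qform_rank1mx_ge0 n m (Phi : 'M[C]_n -> 'M[C]_m) (u : 'rV[C]_n) (t : 'rV[C]_m) :
  completely_positive Phi -> 0 <= qform t (Phi (rank1mx u)).
Proof.
move=> Phi_cp; pose u1 : 'rV[C]_(1 * n) := \row_r u 0 (unvec_index r).2.
have u1_blocks p q : blockmx (rank1mx u1) p q = rank1mx u.
  by apply/matrixP => i j; rewrite !mxE !unvec_mxvec_index.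
have [_ /(_ (\col_r cj (t 0 (unvec_index r).2)))] := Phi_cp 1%N _ (rank1mx_psd u1).
rewrite adjmx_formE big_mxvec_index big_ord1; congr (_ <= _).
apply: eq_bigr => c _; rewrite big_mxvec_index big_ord1; apply: eq_bigr => d _.
by rewrite !mxE !unvec_mxvec_index /= u1_blocks conjCK.
Qed.

End Forms.

HB.instance Definition _ (C : numClosedFieldType) n (u : 'rV[C]_n) :=
  GRing.isLinear.Build C 'M[C]_n C *%R (qform u) (@qform_is_linear C n u).

HB.instance Definition _ (C : numClosedFieldType) (I : finType) n m w x y :=
  GRing.isLinear.Build C 'M[C]_n 'M[C]_m *:%R (@measure_prepare C I n m w x y)
    (@measure_prepare_is_linear C I n m w x y).

Section Spectral.
Variable C : numClosedFieldType.
Local Notation cj := (@Num.conj C).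

Lemma unitarymx_rowsP n m (M : 'M[C]_(n, m)) :
  reflect (forall i k, \sum_x M i x * cj (M k x) = (i == k)%:R) (M \is unitarymx).
Proof.
apply: (iffP unitarymxP) => [E i k | E].
  by move/matrixP: E => /(_ i k); rewrite !mxE => <-;
    apply: eq_bigr => x _; rewrite !mxE.
by apply/matrixP => i k; rewrite !mxE -E; apply: eq_bigr => x _; rewrite !mxE.
Qed.

Lemma adjmx_diag_mulmx n (M : 'M[C]_n) (d : 'rV[C]_n) :
  adjmx M *m diag_mx d *m M = \sum_i d 0 i *: rank1mx (row i M).
Proof.
apply/matrixP => x y; rewrite mxE summxE; apply: eq_bigr => i _.
by rewrite mul_mx_diag !mxE; ring.
Qed.

Lemma sum_rank1mx_unitary n (P : 'M[C]_n) :
  P \is unitarymx -> \sum_i rank1mx (row i P) = 1%:M.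
Proof.
move=> P_unitary; transitivity (adjmx P *m diag_mx (const_mx 1) *m P).
  by rewrite adjmx_diag_mulmx; apply: eq_bigr => i _; rewrite mxE scale1r.
rewrite diag_const_mx mulmx1 /adjmx map_trmx -[_ *m P]mul1mx.
by rewrite mulmxA (mulmxKtV _ P_unitary).
Qed.

Lemma hermitian_rank1_decomposition n (A : 'M[C]_n) (a : 'rV[C]_n) :
  A \is hermsymmx -> eigenvalues_of A a ->
  exists2 P : 'M[C]_n, P \is unitarymx &
    (forall i, a 0 i \is Num.real) /\ A = \sum_i a 0 i *: rank1mx (row i P).
Proof.
move=> A_herm A_eig; set P0 := spectralmx A; set d := spectral_diag A.
have P0_unitary : P0 \is unitarymx := spectral_unitarymx A.
have /orthomx_spectralP A_sim := hermitian_normalmx A_herm.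
have [s a_d] : exists s : 'S_n, forall i, a 0 i = d 0 (s i).
  apply: eq_prod_XsubC_perm; rewrite -A_eig A_sim char_poly_similar ?unitarymx_unit //.
  rewrite char_poly_trig ?diag_mx_is_trig //.
  by apply: eq_bigr => i _; rewrite !mxE eqxx mulr1n.
exists (row_perm s P0).
  apply/unitarymx_rowsP => i k; rewrite -(inj_eq (@perm_inj _ s)).
  by move/unitarymx_rowsP: P0_unitary => /(_ (s i) (s k)) <-;
    apply: eq_bigr => x _; rewrite !mxE.
split=> [i|]; first by rewrite a_d; exact/mxOverP/hermitian_spectral_diag_real.
rewrite A_sim invmx_unitary // -map_trmx adjmx_diag_mulmx.
rewrite (reindex_inj (@perm_inj _ s)) /=; apply: eq_bigr => i _.
by rewrite a_d; congr (_ *: rank1mx _); apply/rowP => x; rewrite !mxE.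
Qed.

Section UnitaryRows.
Variables (n : nat) (P : 'M[C]_n).
Hypothesis P_unitary : P \is unitarymx.

Lemma row_dot_unitary k i : \sum_x row k P 0 x * cj (row i P 0 x) = (k == i)%:R.
Proof.
by move/unitarymx_rowsP: P_unitary => <-; apply: eq_bigr => x _; rewrite !mxE.
Qed.

Lemma qform_row_rank1mx_unitary k i :
  qform (row k P) (rank1mx (row i P)) = (k == i)%:R.
Proof.
by rewrite qform_rank1mx !row_dot_unitary eq_sym; case: (i == k); rewrite ?mulr1 ?mulr0.
Qed.

Lemma qform_row1_unitary k : qform (row k P) 1%:M = 1.
Proof. by rewrite qform1 row_dot_unitary eqxx. Qed.

Lemma qform_row_unitary_sum (c : 'I_n -> C) k :
  qform (row k P) (\sum_i c i *: rank1mx (row i P)) = c k.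
Proof.
rewrite linear_sum (bigD1 k) //= linearZ /= qform_row_rank1mx_unitary eqxx mulr1.
rewrite big1 ?addr0 // => i /negbTE ik.
by rewrite linearZ /= qform_row_rank1mx_unitary eq_sym ik mulr0.
Qed.

End UnitaryRows.

End Spectral.

Section Correspondence.
Variable C : numClosedFieldType.
Variables (n m : nat) (P : 'M[C]_n) (Q : 'M[C]_m) (a : 'rV[C]_n) (b : 'rV[C]_m).
Hypotheses (P_unitary : P \is unitarymx) (Q_unitary : Q \is unitarymx).
Local Notation A := (\sum_i a 0 i *: rank1mx (row i P)).
Local Notation B := (\sum_j b 0 j *: rank1mx (row j Q)).

Definition transition_mx (Phi : 'M[C]_n -> 'M[C]_m) : 'M[C]_(n, m) :=
  \matrix_(i, j) qform (row j Q) (Phi (rank1mx (row i P))).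

Definition eigen_measure_prepare (D : 'M[C]_(n, m)) : {linear 'M[C]_n -> 'M[C]_m} :=
  measure_prepare (fun t : 'I_n * 'I_m => D t.1 t.2)
    (fun t => row t.1 P) (fun t => row t.2 Q).

Lemma transition_mx_ge0 Phi : completely_positive Phi -> nonneg_mx (transition_mx Phi).
Proof. by move=> Phi_cp i j; rewrite mxE; exact: cp_qform_rank1mx_ge0. Qed.

Lemma mulmx_transition_mx (Phi : {linear 'M[C]_n -> 'M[C]_m}) :
  Phi A = B -> b = a *m transition_mx Phi.
Proof.
move=> PhiA; apply/rowP => j; rewrite -[LHS](qform_row_unitary_sum Q_unitary) -PhiA.
rewrite !linear_sum mxE; apply: eq_bigr => i _.
by rewrite !linearZ /= mxE.
Qed.

Lemma transition_mx_col_sum (Phi : {linear 'M[C]_n -> 'M[C]_m}) :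
  unital Phi -> forall j, \sum_i transition_mx Phi i j = 1.
Proof.
move=> Phi1 j; rewrite -(qform_row1_unitary Q_unitary j) -Phi1.
rewrite -(sum_rank1mx_unitary P_unitary) !linear_sum.
by apply: eq_bigr => i _; rewrite mxE.
Qed.

Lemma eigen_measure_prepare_cp (D : 'M[C]_(n, m)) :
  nonneg_mx D -> completely_positive (eigen_measure_prepare D).
Proof. by move=> D_ge0; apply: measure_prepare_cp => t; exact: D_ge0. Qed.

Lemma eigen_measure_prepare_spectrum (D : 'M[C]_(n, m)) :
  b = a *m D -> eigen_measure_prepare D A = B.
Proof.
move=> bE; rewrite /= /measure_prepare.
rewrite -(pair_bigA _ (fun i j => (D i j * qform (row i P) A) *: rank1mx (row j Q))).
rewrite exchange_big /=.
apply: eq_bigr => j _; rewrite bE mxE scaler_suml; apply: eq_bigr => i _.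
by rewrite qform_row_unitary_sum // mulrC.
Qed.

Lemma eigen_measure_prepare_unital (D : 'M[C]_(n, m)) :
  (forall j, \sum_i D i j = 1) -> unital (eigen_measure_prepare D).
Proof.
move=> D_sum; rewrite /unital -(sum_rank1mx_unitary Q_unitary).
rewrite /= /measure_prepare.
rewrite -(pair_bigA _ (fun i j => (D i j * qform (row i P) 1%:M) *: rank1mx (row j Q))).
rewrite exchange_big /=.
apply: eq_bigr => j _.
under eq_bigr do rewrite qform_row1_unitary // mulr1.
by rewrite -scaler_suml D_sum scale1r.
Qed.

Lemma cp_map_spectrumP :
  (exists Phi : {linear 'M[C]_n -> 'M[C]_m}, completely_positive Phi /\ Phi A = B)
  <-> (exists D : 'M[C]_(n, m), nonneg_mx D /\ b = a *m D).
Proof.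
split=> [[Phi [Phi_cp PhiA]] | [D [D_ge0 bE]]].
  exists (transition_mx Phi).
  by split; [exact: transition_mx_ge0 | exact: mulmx_transition_mx].
exists (eigen_measure_prepare D); split; first exact: eigen_measure_prepare_cp.
exact: eigen_measure_prepare_spectrum.
Qed.

Lemma ucp_map_spectrumP :
  (exists Phi : {linear 'M[C]_n -> 'M[C]_m},
     completely_positive Phi /\ unital Phi /\ Phi A = B)
  <-> (exists D : 'M[C]_(n, m), column_stochastic D /\ b = a *m D).
Proof.
split=> [[Phi [Phi_cp [Phi1 PhiA]]] | [D [[D_ge0 D_sum] bE]]].
  exists (transition_mx Phi); split; last exact: mulmx_transition_mx.
  by split; [exact: transition_mx_ge0 | exact: transition_mx_col_sum].
exists (eigen_measure_prepare D); split; first exact: eigen_measure_prepare_cp.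
by split; [exact: eigen_measure_prepare_unital | exact: eigen_measure_prepare_spectrum].
Qed.

End Correspondence.

Section RealSpectra.
Variable C : numClosedFieldType.

Lemma real_bigmaxP (I : eqType) (r : seq I) (F : I -> C) (x0 : C) :
  x0 \is Num.real -> (forall i, F i \is Num.real) ->
  (forall i, i \in r -> F i <= \big[Num.max/x0]_(j <- r) F j)
  /\ \big[Num.max/x0]_(j <- r) F j \in x0 :: map F r.
Proof.
move=> x0_real F_real; elim: r => [|k r [IHle IHmem]]; first by rewrite big_nil mem_head.
have M_real : \big[Num.max/x0]_(j <- r) F j \is Num.real by exact: bigmax_real.
rewrite big_cons; have [Fk_le|M_lt] := real_leP (F_real k) M_real; split.
- by move=> i; rewrite inE => /predU1P[->|/IHle].
- by move: IHmem; rewrite !inE => /orP[->|->]; rewrite ?orbT.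
- by move=> i; rewrite inE => /predU1P[->|/IHle/le_trans->] //; exact: ltW.
- by rewrite !inE eqxx orbT.
Qed.

Lemma real_bigminP (I : eqType) (r : seq I) (F : I -> C) (x0 : C) :
  x0 \is Num.real -> (forall i, F i \is Num.real) ->
  (forall i, i \in r -> \big[Num.min/x0]_(j <- r) F j <= F i)
  /\ \big[Num.min/x0]_(j <- r) F j \in x0 :: map F r.
Proof.
move=> x0_real F_real; elim: r => [|k r [IHle IHmem]]; first by rewrite big_nil mem_head.
have M_real : \big[Num.min/x0]_(j <- r) F j \is Num.real by exact: bigmin_real.
rewrite big_cons; have [Fk_le|M_lt] := real_leP (F_real k) M_real; split.
- by move=> i; rewrite inE => /predU1P[->|/IHle/(le_trans Fk_le)].
- by rewrite !inE eqxx orbT.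
- by move=> i; rewrite inE => /predU1P[->|/IHle] //; exact: ltW.
- by move: IHmem; rewrite !inE => /orP[->|->]; rewrite ?orbT.
Qed.

Section RowExtrema.
Variables (n : nat) (a : 'rV[C]_n.+1).
Hypothesis a_real : forall i, a 0 i \is Num.real.

Lemma rvmax_ge i : a 0 i <= rvmax a.
Proof. by have [-> //] := real_bigmaxP (index_enum 'I_n.+1) (a_real ord0) a_real. Qed.

Lemma rvmin_le i : rvmin a <= a 0 i.
Proof. by have [-> //] := real_bigminP (index_enum 'I_n.+1) (a_real ord0) a_real. Qed.

Lemma rvmax_attained : exists i, rvmax a = a 0 i.
Proof.
have [_] := real_bigmaxP (index_enum 'I_n.+1) (a_real ord0) a_real.
by rewrite /rvmax inE => /predU1P[->|/mapP[i _ ->]]; eexists.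
Qed.

Lemma rvmin_attained : exists i, rvmin a = a 0 i.
Proof.
have [_] := real_bigminP (index_enum 'I_n.+1) (a_real ord0) a_real.
by rewrite /rvmin inE => /predU1P[->|/mapP[i _ ->]]; eexists.
Qed.

Lemma rvmin_real : rvmin a \is Num.real.
Proof. by have [i ->] := rvmin_attained. Qed.

Lemma rvmax_real : rvmax a \is Num.real.
Proof. by have [i ->] := rvmax_attained. Qed.

End RowExtrema.

Lemma real_mul_bounds (M S : C) : M \is Num.real -> 0 <= S ->
  exists2 g : C * C, 0 <= g.1 /\ 0 <= g.2 &
    forall s, 0 <= s -> s <= S -> g.2 * M <= M * s /\ M * s <= g.1 * M.
Proof.
move=> M_real S_ge0; have [M_ge0|M_lt0] := real_leP (real0 C) M_real.
  exists (S, 0) => // s s_ge0 s_le /=; rewrite mul0r mulr_ge0 //.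
  by split=> //; rewrite [S * M]mulrC; apply: ler_wpM2l.
exists (0, S) => // s s_ge0 s_le /=; rewrite mul0r mulrC; split.
  by apply: ler_wnM2l => //; exact: ltW.
by apply: mulr_le0_ge0 => //; exact: ltW.
Qed.

Lemma real_cone_coeffs (x lo hi g1 g2 : C) :
  x \is Num.real -> lo \is Num.real -> hi \is Num.real -> 0 <= g1 -> 0 <= g2 ->
  g2 * lo <= x -> x <= g1 * hi ->
  exists c : C * C, [/\ 0 <= c.1, 0 <= c.2 & x = c.1 * hi + c.2 * lo].
Proof.
move=> x_real lo_real hi_real g1_ge0 g2_ge0 lo_le le_hi.
have [x_ge0|x_lt0] := real_leP (real0 C) x_real.
  have [hi_gt0|hi_le0] := real_ltP (real0 C) hi_real.
    exists (x / hi, 0); split=> //=; first exact: divr_ge0 x_ge0 (ltW hi_gt0).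
    by rewrite mul0r addr0 divfK ?gt_eqF.
  exists (0, 0); rewrite /= !mul0r addr0; split=> //; apply/eqP; rewrite eq_le x_ge0.
  by rewrite (le_trans le_hi) // mulr_ge0_le0.
have lo_lt0 : lo < 0.
  rewrite real_ltNge // ; apply: contraTN x_lt0 => lo_ge0.
  by rewrite -real_leNgt ?real0 //; exact: le_trans (mulr_ge0 g2_ge0 lo_ge0) lo_le.
exists (0, x / lo); rewrite /= mul0r add0r divfK ?lt_eqF //.
by split=> //; rewrite mulr_le0 ?invr_le0 ?ltW.
Qed.

Lemma convex_coeffs (x lo hi : C) : lo <= x -> x <= hi ->
  exists c : C * C, [/\ 0 <= c.1, 0 <= c.2, c.1 + c.2 = 1 & x = c.1 * hi + c.2 * lo].
Proof.
move=> lo_le le_hi; have [hi_lo|hi_neq] := eqVneq hi lo.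
  exists (1, 0); rewrite /= mul1r mul0r addr0 addr0 ler01 lexx; split=> //.
  by apply/eqP; rewrite eq_le le_hi hi_lo lo_le.
have d_gt0 : 0 < hi - lo by rewrite subr_gt0 lt_def hi_neq (le_trans lo_le).
exists ((x - lo) / (hi - lo), 1 - (x - lo) / (hi - lo)); split => /=.
- by apply: divr_ge0; [rewrite subr_ge0 | exact: ltW].
- by rewrite subr_ge0 ler_pdivrMr // mul1r lerD2r.
- by rewrite addrC subrK.
- by field; rewrite gt_eqF.
Qed.

Section TwoPointMatrix.
Variables (n m : nat) (k1 k2 : 'I_n) (c : 'I_m -> C * C).

Definition two_point_mx : 'M[C]_(n, m) :=
  \matrix_(i, j) ((if i == k1 then (c j).1 else 0) + (if i == k2 then (c j).2 else 0)).

Lemma two_point_mx_ge0 :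
  (forall j, 0 <= (c j).1 /\ 0 <= (c j).2) -> nonneg_mx two_point_mx.
Proof.
by move=> c_ge0 i j; rewrite mxE; have [? ?] := c_ge0 j; apply: addr_ge0; case: eqP.
Qed.

Lemma two_point_mx_col_sum j : \sum_i two_point_mx i j = (c j).1 + (c j).2.
Proof.
under eq_bigr do rewrite mxE.
by rewrite big_split /= -!big_mkcond !big_pred1_eq.
Qed.

Lemma mulmx_two_point_mx (a : 'rV[C]_n) j :
  (a *m two_point_mx) 0 j = (c j).1 * a 0 k1 + (c j).2 * a 0 k2.
Proof.
rewrite mxE; under eq_bigr do rewrite mxE mulrDr !(fun_if (GRing.mul _)) !mulr0.
by rewrite big_split /= -!big_mkcond !big_pred1_eq !(mulrC (a 0 _)).
Qed.

End TwoPointMatrix.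

Section Characterisation.
Variables (n m : nat) (a : 'rV[C]_n.+1) (b : 'rV[C]_m).
Hypotheses (a_real : forall i, a 0 i \is Num.real) (b_real : forall j, b 0 j \is Num.real).

Lemma mulmx_ge0_bounds (D : 'M[C]_(n.+1, m)) : nonneg_mx D -> forall j,
  rvmin a * \sum_i D i j <= (a *m D) 0 j /\ (a *m D) 0 j <= rvmax a * \sum_i D i j.
Proof.
move=> D_ge0 j; rewrite mxE !mulr_sumr; split; apply: ler_sum => i _;
  apply: ler_wpM2r; rewrite ?D_ge0 ?rvmin_le ?rvmax_ge //.
Qed.

Lemma nonneg_mx_spectrumP :
  (exists D : 'M[C]_(n.+1, m), nonneg_mx D /\ b = a *m D)
  <-> (exists g1 g2 : C, [/\ 0 <= g1, 0 <= g2 &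
         forall j, g2 * rvmin a <= b 0 j /\ b 0 j <= g1 * rvmax a]).
Proof.
split=> [[D [D_ge0 ->]] | [g1 [g2 [g1_ge0 g2_ge0 b_bnd]]]].
  pose S := \sum_j \sum_i D i j.
  have col_ge0 j : 0 <= \sum_i D i j by apply: sumr_ge0 => i _; exact: D_ge0.
  have col_le j : \sum_i D i j <= S.
    by rewrite /S (bigD1 j) //= lerDl sumr_ge0.
  have S_ge0 : 0 <= S by apply: sumr_ge0.
  have [g [g1_ge0 _] g_bnd] := real_mul_bounds (rvmax_real a_real) S_ge0.
  have [h [_ h2_ge0] h_bnd] := real_mul_bounds (rvmin_real a_real) S_ge0.
  exists g.1, h.2; split=> // j; have [lo hi] := mulmx_ge0_bounds D_ge0 j; split.
    exact: le_trans (h_bnd _ (col_ge0 j) (col_le j)).1 lo.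
  exact: le_trans hi (g_bnd _ (col_ge0 j) (col_le j)).2.
have [imax Emax] := rvmax_attained a_real; have [imin Emin] := rvmin_attained a_real.
have coeffs j : exists c : C * C,
    [/\ 0 <= c.1, 0 <= c.2 & b 0 j = c.1 * a 0 imax + c.2 * a 0 imin].
  rewrite -Emax -Emin; have [lo hi] := b_bnd j.
  apply: real_cone_coeffs g1_ge0 g2_ge0 lo hi; first exact: b_real.
    exact: rvmin_real.
  exact: rvmax_real.
have [c c_spec] := fin_all_exists coeffs.
exists (two_point_mx imax imin c); split.
  by apply: two_point_mx_ge0 => j; have [] := c_spec j.
by apply/rowP => j; rewrite mulmx_two_point_mx; have [_ _ ->] := c_spec j.
Qed.

Lemma column_stochastic_spectrumP :
  (exists D : 'M[C]_(n.+1, m), column_stochastic D /\ b = a *m D)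
  <-> (forall j, rvmin a <= b 0 j /\ b 0 j <= rvmax a).
Proof.
split=> [[D [[D_ge0 D_sum] ->]] j | b_bnd].
  by have := mulmx_ge0_bounds D_ge0 j; rewrite D_sum !mulr1.
have [imax Emax] := rvmax_attained a_real; have [imin Emin] := rvmin_attained a_real.
have coeffs j : exists c : C * C, [/\ 0 <= c.1, 0 <= c.2, c.1 + c.2 = 1 &
    b 0 j = c.1 * a 0 imax + c.2 * a 0 imin].
  by rewrite -Emax -Emin; have [lo hi] := b_bnd j; exact: convex_coeffs lo hi.
have [c c_spec] := fin_all_exists coeffs.
exists (two_point_mx imax imin c); split; first split.
- by apply: two_point_mx_ge0 => j; have [] := c_spec j.
- by move=> j; rewrite two_point_mx_col_sum; have [] := c_spec j.
by apply/rowP => j; rewrite mulmx_two_point_mx; have [_ _ _ ->] := c_spec j.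
Qed.

End Characterisation.

End RealSpectra.

Theorem theorem3p1 (C : numClosedFieldType) (n m : nat)
  (A : 'M[C]_n.+1) (B : 'M[C]_m.+1) (a : 'rV[C]_n.+1) (b : 'rV[C]_m.+1) :
  A \is hermsymmx -> B \is hermsymmx ->
  eigenvalues_of A a -> eigenvalues_of B b ->
  ((exists Phi : {linear 'M[C]_n.+1 -> 'M[C]_m.+1},
       completely_positive Phi /\ Phi A = B)
   <-> (exists D : 'M[C]_(n.+1, m.+1), nonneg_mx D /\ b = a *m D))
  /\
  ((exists D : 'M[C]_(n.+1, m.+1), nonneg_mx D /\ b = a *m D)
   <-> (exists g1 g2 : C, [/\ 0 <= g1, 0 <= g2 &
          forall j, g2 * rvmin a <= b 0 j /\ b 0 j <= g1 * rvmax a]))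
  /\
  ((exists Phi : {linear 'M[C]_n.+1 -> 'M[C]_m.+1},
       completely_positive Phi /\ unital Phi /\ Phi A = B)
   <-> (exists D : 'M[C]_(n.+1, m.+1), column_stochastic D /\ b = a *m D))
  /\
  ((exists D : 'M[C]_(n.+1, m.+1), column_stochastic D /\ b = a *m D)
   <-> (forall j, rvmin a <= b 0 j /\ b 0 j <= rvmax a)).
Proof.
move=> A_herm B_herm A_eig B_eig.
have [P P_unitary [a_real ->]] := hermitian_rank1_decomposition A_herm A_eig.
have [Q Q_unitary [b_real ->]] := hermitian_rank1_decomposition B_herm B_eig.
split; first exact: cp_map_spectrumP.
split; first exact: nonneg_mx_spectrumP.
split; first exact: ucp_map_spectrumP.
exact: column_stochastic_spectrumP.
Qed.
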